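(* Let $H=H_1\times R$ be a connected non-trivial core such that $H_1$ is truly projective and $R\not\cong K_1^*$, and let $w\in V(R)$. Then there exist a graph $F$ and vertices $u^*,v^*\in V(F)$ such that: (a) for every edge $xy\in E(H_1)$ there is a homomorphism $f\colon F\to H$ with $f(u^* )=(x,w)$ and $f(v^* )=(y,w)$; (b) for every homomorphism $f\colon F\to H$, writing $f_1=\pi_1\circ f$ for the first coordinate of $f$ (with values in $V(H_1)$), we have $f_1(u^* )f_1(v^* )\in E(H_1)$.
   Context: Graphs are finite, undirected, without parallel edges, loops allowed; $K_1^*$ is the one-vertex graph with a loop. A homomorphism is an edge-preserving vertex map. A core is a graph with no homomorphism to a proper subgraph of itself; it is trivial if isomorphic to $K_1$, $K_1^*$ or $K_2$, non-trivial otherwise. Graphs $G,H$ are incomparable if there is no homomorphism $G\to H$ and none $H\to G$. The direct product $H_1\times H_2$ has vertex set $V(H_1)\times V(H_2)$ with $(x_1,y_1)(x_2,y_2)$ an edge iff $x_1x_2\in E(H_1)$ and $y_1y_2\in E(H_2)$; $H^m$ is the $m$-fold product and $\pi_i$ the $i$-th coordinate projection. $H$ is truly projective if it has at least three vertices and for every $s\ge2$ and every connected core $W$ incomparable with $H$, every homomorphism $f\colon H^s\times W\to H$ satisfying $f(x,\dots,x,y)=x$ for all $x\in V(H)$, $y\in V(W)$ equals $\pi_i$ for some $i\in[s]$. *)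

From mathcomp Require Import all_boot.
Set Implicit Arguments. Unset Strict Implicit. Unset Printing Implicit Defensive.

Record graph := Graph {
  vert : finType;
  adj : rel vert;
  adj_sym : symmetric adj }.

Definition hom (G H : graph) (f : vert G -> vert H) : Prop :=
  forall x y, adj x y -> adj (f x) (f y).
Arguments hom : clear implicits.

Definition homexists (G H : graph) : Prop := exists f, hom G H f.

Definition incomparable (G H : graph) : Prop :=
  ~ homexists G H /\ ~ homexists H G.

Definition isomorphic (G H : graph) : Prop :=
  exists f : vert G -> vert H, bijective f /\ forall x y, adj (f x) (f y) = adj x y.

(* Core: no homomorphism to a proper subgraph (S, E'), where S is a vertex
   subset, E' a symmetric edge relation contained in adj with endpoints in S;
   proper means S <> V or E' <> E. *)
Definition core (G : graph) : Prop :=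
  forall (S : {set vert G}) (E' : rel (vert G)),
    symmetric E' ->
    (forall x y, E' x y -> adj x y) ->
    (forall x y, E' x y -> (x \in S) && (y \in S)) ->
    forall f : vert G -> vert G,
      (forall x, f x \in S) -> (forall x y, adj x y -> E' (f x) (f y)) ->
      S = setT /\ (forall x y, E' x y = adj x y).

Definition connected (G : graph) : Prop :=
  (0 < #|vert G|)%N /\ forall x y : vert G, connect (@adj G) x y.

Definition K1 : graph := @Graph unit (fun _ _ => false) (fun _ _ => erefl).
Definition K1s : graph := @Graph unit (fun _ _ => true) (fun _ _ => erefl).
Lemma K2_sym : symmetric (fun x y : bool => x != y).
Proof. by move=> x y; rewrite eq_sym. Qed.
Definition K2 : graph := @Graph bool (fun x y => x != y) K2_sym.

Definition trivial_graph (G : graph) : Prop :=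
  isomorphic G K1 \/ isomorphic G K1s \/ isomorphic G K2.

Definition prod_adj (G H : graph) : rel (vert G * vert H) :=
  fun p q => adj p.1 q.1 && adj p.2 q.2.
Arguments prod_adj : clear implicits.
Lemma prod_adj_sym (G H : graph) : symmetric (prod_adj G H).
Proof. by move=> p q; rewrite /prod_adj adj_sym [adj p.2 _]adj_sym. Qed.
Definition prodg (G H : graph) : graph :=
  @Graph (vert G * vert H)%type (prod_adj G H) (@prod_adj_sym G H).

Definition pow_adj (H : graph) (m : nat) : rel {ffun 'I_m -> vert H} :=
  fun f g => [forall i, adj (f i) (g i)].
Lemma pow_adj_sym H m : symmetric (@pow_adj H m).
Proof.
move=> f g; apply/forallP/forallP => E i; by rewrite adj_sym.
Qed.
Definition powg (H : graph) (m : nat) : graph :=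
  @Graph {ffun 'I_m -> vert H} (@pow_adj H m) (@pow_adj_sym H m).

Definition truly_projective (H : graph) : Prop :=
  (3 <= #|vert H|)%N /\
  forall (s : nat) (W : graph), (2 <= s)%N -> connected W -> core W ->
    incomparable W H ->
    forall f : vert (prodg (powg H s) W) -> vert H,
      hom (prodg (powg H s) W) H f ->
      (forall (x : vert H) (y : vert W), f ([ffun _ => x], y) = x) ->
      exists i : 'I_s, forall (p : {ffun 'I_s -> vert H}) (y : vert W),
        f (p, y) = p i.

From mathcomp Require Import all_boot.
Set Implicit Arguments. Unset Strict Implicit. Unset Printing Implicit Defensive.

(* The gadget is F = H1^s x R with one coordinate of H1^s
   per ordered pair of vertices of H1, carrying that pair if it is an edge
   and a fixed edge otherwise; u* = (sources, w) and v* = (targets, w).  Part (a) is witnessed by the coordinate projections.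
   For (b), a homomorphism f : F -> H induces the "bi-homomorphism"
   psi a y = pi_1 (f (a,...,a), y) from H1 x R to H1.  Since H is a core,
   (a,y) |-> (psi a y, y) is an automorphism of H, so every fibre psi(-,y)
   is a bijection, and a parity argument along walks of R (R cannot be
   bipartite, for H would then retract onto an edge) shows that psi(-,w) is
   an automorphism of H1.  Straightening f by the inverse fibres gives an
   idempotent homomorphism H1^s x R -> H1, which is a projection because H1
   is truly projective; hence the first coordinates of f at u* and at v*
   are the images of an edge of H1 under the automorphism psi(-,w). *)

Lemma connect_ind (T : finType) (e : rel T) (P : T -> Prop) (x y : T) :
  (forall u v, e u v -> P u -> P v) -> P x -> connect e x y -> P y.
Proof.
move=> stepP Px /connectP [s es ->].
elim: s x Px es => [|z s IHs] x //= Px /andP [exz es].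
exact: IHs (stepP _ _ exz Px) es.
Qed.

Lemma hom_connect (G G' : graph) (f : vert G -> vert G') (x y : vert G) :
  hom G G' f -> connect (@adj G) x y -> connect (@adj G') (f x) (f y).
Proof.
move=> hf; apply: (connect_ind (P := fun v => connect (@adj G') (f x) (f v))).
- by move=> u v /hf euv Pu; exact: connect_trans Pu (connect1 euv).
- exact: connect0.
Qed.

Lemma connected_has_edge (G : graph) :
  connected G -> 1 < #|vert G| -> exists p q : vert G, adj p q.
Proof.
move=> [_ cG] /card_gt1P [x [y [_ _ nxy]]].
case/connectP: (cG x y) => [[|z s] /= exs yE]; first by rewrite yE eqxx in nxy.
by case/andP: exs => exz _; exists x, z.
Qed.

Lemma connected_prod_right (G R : graph) : connected (prodg G R) -> connected R.
Proof.
move=> [/card_gt0P [[a r] _] connGR]; split=> [|y y']; first by apply/card_gt0P; exists r.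
have := @hom_connect (prodg G R) R snd (a, y) (a, y') _ (connGR _ _).
by apply=> u v /andP [].
Qed.

Lemma onto_bijective (T : finType) (f : T -> T) :
  (forall v, exists u, f u = v) -> bijective f.
Proof.
move=> f_onto; pose g v := odflt v [pick u | f u == v].
have gK : cancel g f.
  move=> v; rewrite /g; case: pickP => [u /eqP //|/= none].
  by case: (f_onto v) => u fu; move: (none u); rewrite fu eqxx.
by exists g => //; exact: canF_sym gK.
Qed.

(* An endomorphism of a core is onto, on vertices and on edges: its image
   is a subgraph to which the core retracts. *)
Lemma core_endo_onto (G : graph) (h : vert G -> vert G) :
  core G -> hom G G h ->
  (forall v, exists u, h u = v) /\
  (forall p q, adj p q -> exists x y, [/\ adj x y, h x = p & h y = q]).
Proof.
move=> cG hh.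
pose S := [set v | [exists u, h u == v]].
pose E' := [rel p q | [exists x, exists y, [&& adj x y, h x == p & h y == q]]].
have E'_sym : symmetric E'.
  move=> p q /=; apply/existsP/existsP => -[x /existsP [y /and3P [exy hx hy]]];
  by exists y; apply/existsP; exists x; rewrite adj_sym exy hx hy.
have [||||S_full E'_full] := cG S E' E'_sym _ _ h.
- by move=> p q /existsP [x /existsP [y /and3P [/hh exy /eqP <- /eqP <-]]].
- move=> p q /existsP [x /existsP [y /and3P [_ /eqP <- /eqP <-]]].
  by rewrite !inE; apply/andP; split; apply/existsP; [exists x | exists y].
- by move=> x; rewrite inE; apply/existsP; exists x.
- by move=> x y exy; apply/existsP; exists x; apply/existsP; exists y; rewrite exy !eqxx.
split.
  move=> v; have : v \in S by rewrite S_full inE.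
  by rewrite inE => /existsP [u /eqP <-]; exists u.
move=> p q epq; move: (E'_full p q); rewrite epq.
by move=> /existsP [x /existsP [y /and3P [exy /eqP <- /eqP <-]]]; exists x, y.
Qed.

Lemma core_endo_bij (G : graph) (h : vert G -> vert G) :
  core G -> hom G G h -> bijective h.
Proof. by move=> cG hh; apply: onto_bijective (core_endo_onto cG hh).1. Qed.

Definition iso_pair (G : graph) (g g' : vert G -> vert G) : bool :=
  [forall a, forall b, adj (g a) (g' b) == adj a b].

Lemma iso_pairP (G : graph) (g g' : vert G -> vert G) :
  reflect (forall a b, adj (g a) (g' b) = adj a b) (iso_pair g g').
Proof.
apply: (iffP forallP) => [E a b|E a]; first exact/eqP/(forallP (E a) b).
by apply/forallP => b; rewrite E.
Qed.

Lemma eq_iso_pair (G : graph) (g1 g2 g1' g2' : vert G -> vert G) :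
  g1 =1 g2 -> g1' =1 g2' -> iso_pair g1 g1' = iso_pair g2 g2'.
Proof.
move=> E E'; apply/iso_pairP/iso_pairP => P a b; first by rewrite -E -E' P.
by rewrite E E' P.
Qed.

Section ProductCore.

Variables H1 R : graph.
Local Notation H := (prodg H1 R).
Hypothesis coreH : core H.

(* The first factor of the core H has no two vertices with equal
   neighbourhoods: otherwise H would fold one onto the other. *)
Lemma prod_core_twins (r0 : vert R) (a a' : vert H1) : adj a =1 adj a' -> a = a'.
Proof.
move=> twins; pose t v := if v == a' then a else v.
have adj_t u : adj (t u) =1 adj u by rewrite /t; case: eqP => [-> | //]; exact: twins.
have t_hom : hom H H (fun v => (t v.1, v.2)).
  move=> [u y] [v y'] /andP [/= euv eyy']; apply/andP; split => //=.
  by rewrite adj_t adj_sym adj_t adj_sym.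
have [[u y] [tu _]] := (core_endo_onto coreH t_hom).1 (a', r0).
by move: tu; rewrite /t; case: eqP => // /eqP nua ua; rewrite ua eqxx in nua.
Qed.

Lemma prod_core_right_core (x0 y0 : vert H1) : adj x0 y0 -> core R.
Proof.
move=> e0 S E' E'_sym E'_adj E'_S g gS gE.
pose SH := [set v : vert H | v.2 \in S].
pose EH := [rel u v : vert H | adj u.1 v.1 && E' u.2 v.2].
have [|||||SH_full EH_full] := @coreH SH EH _ _ _ (fun v => (v.1, g v.2)).
- by move=> u v /=; rewrite adj_sym E'_sym.
- by move=> u v /andP [e1 /E'_adj e2]; apply/andP.
- by move=> u v /andP [_ e2]; rewrite !inE; exact: E'_S.
- by move=> v; rewrite inE; exact: gS.
- by move=> u v /andP [e1 /gE e2]; apply/andP.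
split; last by move=> r r'; move: (EH_full (x0, r) (y0, r')); rewrite /= /prod_adj /= e0.
apply/setP => r; rewrite inE.
by move: (in_setT (x0, r)); rewrite -SH_full inE.
Qed.

(* A map R -> H1 would retract H onto a copy of R, so H1 is a single vertex. *)
Lemma prod_core_no_hom_right_left (r0 : vert R) : homexists R H1 -> #|vert H1| <= 1.
Proof.
case=> g hg; pose h (v : vert H) : vert H := (g v.2, v.2).
have hh : hom H H h by move=> u v /andP [_ e]; apply/andP; split => //=; exact: hg.
have [h_onto _] := core_endo_onto coreH hh.
have const a : a = g r0 by case: (h_onto (a, r0)) => [[b r]] [<- <-].
by apply/card_le1_eqP => a a' _ _; rewrite [a]const [a']const.
Qed.

Lemma prod_core_no_hom_left_right (a : vert H1) (y y' : vert R) :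
  adj y y' -> homexists H1 R -> isomorphic R K1s.
Proof.
move=> eyy' [g hg]; pose h (v : vert H) : vert H := (v.1, g v.1).
have hh : hom H H h by move=> u v /andP [e _]; apply/andP; split => //=; exact: hg.
have [h_onto _] := core_endo_onto coreH hh.
have const r : r = g a by case: (h_onto (a, r)) => [[b r']] [-> <-].
exists (fun _ => tt); split; first by exists (fun _ => g a) => [r|[]]; rewrite -?const.
by move=> r r'; rewrite [r]const [r']const; move: eyy'; rewrite [y]const [y']const => ->.
Qed.

Lemma prod_core_incomparable (a : vert H1) (y y' : vert R) :
  1 < #|vert H1| -> adj y y' -> ~ isomorphic R K1s -> incomparable R H1.
Proof.
move=> H1_big eyy' not_K1s; split.
- by move=> /(prod_core_no_hom_right_left y); rewrite leqNgt H1_big.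
- by move=> /(prod_core_no_hom_left_right a eyy').
Qed.

(* If R were bipartite, H would retract onto one of its edges, so H1 would
   have at most two vertices. *)
Lemma prod_core_nonbipartite (col : vert R -> bool) (p q : vert H) :
  adj p q -> (forall y y', adj y y' -> col y != col y') -> #|vert H1| <= 2.
Proof.
move=> epq col_proper.
pose K (v : vert H) := if col v.2 == col p.2 then p else q.
have cpq : col p.2 != col q.2 by apply: col_proper; case/andP: epq.
have K_hom : hom H H K.
  move=> u v euv; rewrite /K.
  have cuv : col u.2 != col v.2 by apply: col_proper; case/andP: euv.
  move: cuv cpq; case: (col u.2) (col v.2) (col p.2) => [] [] [] //= _ _;
  by rewrite (prod_adj_sym q p).
have [K_onto _] := core_endo_onto coreH K_hom.
have two : #|[set p.1; q.1]| <= 2 by rewrite cards2 ltnS leq_b1.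
apply: leq_trans two; apply: subset_leq_card; apply/subsetP => a _.
case: (K_onto (a, p.2)) => u; rewrite /K; case: ifP => _ Ku;
by rewrite -[a]/((a, p.2).1) -Ku !inE eqxx ?orbT.
Qed.

Section BiHomomorphism.

Variable psi : vert H1 -> vert R -> vert H1.
Hypothesis psi_hom : forall a b y y', adj a b -> adj y y' -> adj (psi a y) (psi b y').
Local Notation fibre y := (psi ^~ y).

(* (a, y) |-> (psi a y, y) is an endomorphism, hence an automorphism, of H. *)
Let N (v : vert H) : vert H := (psi v.1 v.2, v.2).

Let N_hom : hom H H N.
Proof. by move=> [a y] [b y'] /andP [/= eab eyy']; apply/andP; split => //=; apply: psi_hom. Qed.

Let N_inj : injective N.
Proof. exact/bij_inj/(core_endo_bij coreH N_hom). Qed.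

Lemma bihom_fibre_bij y : bijective (fibre y).
Proof.
apply: injF_bij => a b E.
by have [] : (a, y) = (b, y) by apply: N_inj; rewrite /N /= E.
Qed.

Lemma bihom_edge_iso y y' : adj y y' -> iso_pair (fibre y) (fibre y').
Proof.
move=> eyy'; apply/iso_pairP => a b; apply/idP/idP => [epsi|eab]; last exact: psi_hom.
have /(core_endo_onto coreH N_hom).2 [u [v [euv Nu Nv]]] : adj (N (a, y)) (N (b, y')).
  exact/andP.
by move: euv; rewrite (N_inj Nu) (N_inj Nv) => /andP [].
Qed.

(* Two iso-pair steps return to the same fibre, by the twin lemma. *)
Lemma iso_pair_twice y1 y2 y3 :
  iso_pair (fibre y1) (fibre y2) -> iso_pair (fibre y2) (fibre y3) -> fibre y1 =1 fibre y3.
Proof.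
move=> /iso_pairP iso12 /iso_pairP iso23 a; apply: (prod_core_twins y1) => c.
have [g _ gK] := bihom_fibre_bij y2.
by rewrite -(gK c) iso12 adj_sym -iso23 adj_sym.
Qed.

Lemma bihom_parity w y :
  connect (@adj R) w y -> fibre w =1 fibre y \/ iso_pair (fibre w) (fibre y).
Proof.
apply: (connect_ind (P := fun y => fibre w =1 fibre y \/ iso_pair (fibre w) (fibre y))).
  move=> u v euv [same_u | iso_u].
  - by right; rewrite (eq_iso_pair (g2 := fibre u) (g2' := fibre v)) //; exact: bihom_edge_iso.
  - by left; apply: iso_pair_twice iso_u (bihom_edge_iso euv).
by left.
Qed.

(* Since R is connected and not bipartite, the fibre over w is an
   automorphism of H1. *)
Lemma bihom_diag_iso w :
  connected R -> 2 < #|vert H1| -> (exists p q : vert H, adj p q) ->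
  iso_pair (fibre w) (fibre w).
Proof.
move=> [_ connR] H1_big [p [q epq]].
case: (boolP (iso_pair (fibre w) (fibre w))) => // not_iso; exfalso.
suff col_proper y y' : adj y y' ->
    iso_pair (fibre w) (fibre y) != iso_pair (fibre w) (fibre y').
  by move: H1_big; rewrite ltnNge (prod_core_nonbipartite epq col_proper).
move=> eyy'; case: (bihom_parity (connR w y)) => [same_y | iso_y].
- rewrite (eq_iso_pair (frefl _) (fsym same_y)) (negbTE not_iso).
  by rewrite (eq_iso_pair same_y (frefl _)) bihom_edge_iso.
- have same_y' : fibre w =1 fibre y' by apply: iso_pair_twice iso_y (bihom_edge_iso eyy').
  by rewrite iso_y (eq_iso_pair (frefl _) (fsym same_y')) (negbTE not_iso).
Qed.

End BiHomomorphism.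

End ProductCore.

Section Gadget.

Variables (H1 R : graph) (x0 y0 : vert H1) (w : vert R).
Local Notation H := (prodg H1 R).

(* One coordinate of H1^s per ordered pair of vertices; non-edges are
   replaced by the default edge (x0, y0). *)
Definition gadget_size : nat := #|{: vert H1 * vert H1}|.

Definition padded_edge (i : 'I_gadget_size) : vert H1 * vert H1 :=
  let e := enum_val i in if adj e.1 e.2 then e else (x0, y0).

Definition gadget : graph := prodg (powg H1 gadget_size) R.

Definition gadget_u : vert gadget := ([ffun i => (padded_edge i).1], w).
Definition gadget_v : vert gadget := ([ffun i => (padded_edge i).2], w).

(* Part (a): the coordinate indexing the edge xy realises it. *)
Lemma gadget_realizes_edges (x y : vert H1) : adj x y ->
  exists f : vert gadget -> vert H,
    hom gadget H f /\ f gadget_u = (x, w) /\ f gadget_v = (y, w).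
Proof.
move=> exy; pose i : 'I_gadget_size := enum_rank (x, y).
exists (fun v : vert gadget => ((v.1 : {ffun _ -> _}) i, v.2)); split.
  by move=> [u r] [v r'] /andP [/forallP e1 e2]; apply/andP; split => //=; exact: e1.
by rewrite /= !ffunE /padded_edge /i enum_rankK /= exy.
Qed.

Hypothesis e0 : adj x0 y0.
Hypothesis H1_tp : truly_projective H1.
Hypotheses (connR : connected R) (coreR : core R) (incR : incomparable R H1).
Hypotheses (coreH : core H) (H_edge : exists p q : vert H, adj p q).

(* Part (b): straightening f by the inverse fibres yields an idempotent
   homomorphism H1^s x R -> H1, i.e. a projection, and the fibre over w is
   an automorphism of H1. *)
Lemma gadget_forces_edge (f : vert gadget -> vert H) :
  hom gadget H f -> adj (f gadget_u).1 (f gadget_v).1.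
Proof.
move=> hf; pose psi a y := (f ([ffun _ => a], y)).1.
have psi_hom a b y y' : adj a b -> adj y y' -> adj (psi a y) (psi b y').
  move=> eab eyy'; suff /andP [] : adj (f ([ffun _ => a], y)) (f ([ffun _ => b], y')) by [].
  by apply: hf; apply/andP; split => //=; apply/forallP => i; rewrite !ffunE.
have fib_inj y := bij_inj (bihom_fibre_bij coreH psi_hom y).
pose Phi (v : vert gadget) := invF (fib_inj v.2) (f v).1.
have fE v : (f v).1 = psi (Phi v) v.2 by exact/esym/(f_invF (fib_inj v.2)).
have Phi_hom : hom gadget H1 Phi.
  move=> u v euv; have /andP [e1 _] := hf _ _ euv.
  have /andP [_ e2] := euv.
  move/iso_pairP: (bihom_edge_iso coreH psi_hom e2) => iso.
  by rewrite -iso -!fE.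
have Phi_idem x y : Phi ([ffun _ => x], y) = x by rewrite /Phi invF_f.
have s2 : 2 <= gadget_size.
  by rewrite /gadget_size card_prod (leq_trans _ (leq_mul H1_tp.1 H1_tp.1)).
have [i Phi_proj] := H1_tp.2 _ _ s2 connR coreR incR Phi Phi_hom Phi_idem.
have /iso_pairP diag := bihom_diag_iso coreH psi_hom w connR H1_tp.1 H_edge.
rewrite !fE !Phi_proj /= diag !ffunE /padded_edge.
by case: ifP.
Qed.

End Gadget.

Unset Implicit Arguments.

Theorem lemma17 (H1 R : graph) (w : vert R) :
  connected (prodg H1 R) -> core (prodg H1 R) -> ~ trivial_graph (prodg H1 R) ->
  truly_projective H1 -> ~ isomorphic R K1s ->
  exists (F : graph) (us vs : vert F),
    (forall x y : vert H1, adj x y ->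
       exists f : vert F -> vert (prodg H1 R),
         hom F (prodg H1 R) f /\ f us = (x, w) /\ f vs = (y, w)) /\
    (forall f : vert F -> vert (prodg H1 R),
       hom F (prodg H1 R) f -> adj (f us).1 (f vs).1).
Proof.
move=> connH coreH _ H1_tp not_K1s.
have connR := connected_prod_right connH.
have H_edge : exists p q : vert (prodg H1 R), adj p q.
  apply: connected_has_edge connH _.
  by rewrite card_prod (leq_trans _ (leq_pmulr _ connR.1)) // (leq_trans _ H1_tp.1).
have [[x0 r0] [[y0 r1] /andP [/= e0 er]]] := H_edge.
have incR := prod_core_incomparable coreH x0 (ltnW H1_tp.1) er not_K1s.
exists (gadget H1 R), (gadget_u x0 y0 w), (gadget_v x0 y0 w); split.
- exact: gadget_realizes_edges.
- exact: gadget_forces_edge w e0 H1_tp connR (prod_core_right_core coreH e0) incR coreH H_edge.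
Qed.
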